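(* Let $\mathsf{T},\mathsf{U}$ be geometric theories over a set $\mathrm{At}$, and let $R = \{([\varphi]_{\mathsf T},[\psi]_{\mathsf T}) \mid (\varphi\vdash\psi)\in\mathsf T\cup\mathsf U\}$, a binary relation on the frame $\mathrm{Geom}(\mathrm{At})/\mathsf{T}$. Let $\overline{R}$ be the least congruence preorder on $\mathrm{Geom}(\mathrm{At})/\mathsf T$ containing $R$, and $\sim_{\overline R}$ the equivalence it induces. Then $\mathrm{Geom}(\mathrm{At})/(\mathsf T\cup\mathsf U)$ is isomorphic to the quotient of $\mathrm{Geom}(\mathrm{At})/\mathsf T$ by $\sim_{\overline R}$.
   Context: Geometric logic over $\mathrm{At}$: conjunctive formulae $\gamma::=p\mid\mathsf{true}\mid\gamma\wedge\gamma$; $\mathrm{Geom}(\mathrm{At})$ consists of $\bigvee S$ for sets $S$ of conjunctive formulae; $\bigvee_i\varphi_i$ collects all disjuncts; $\varphi\wedge\psi=\bigvee\{\gamma\wedge\gamma'\}$ over disjuncts. For a theory $\mathsf T$ (set of sequents $\varphi\vdash\psi$), $\vdash_{\mathsf T}$ is the least relation closed under: theory axioms; reflexivity; cut; $\varphi\wedge\psi\vdash\varphi$, $\varphi\wedge\psi\vdash\psi$; from $\theta\vdash\varphi$, $\theta\vdash\psi$ infer $\theta\vdash\varphi\wedge\psi$; $\varphi\vdash\mathsf{true}$; from $\varphi_i\vdash\psi$ for all $i$ infer $\bigvee_i\varphi_i\vdash\psi$; $\varphi_i\vdash\bigvee_i\varphi_i$. $\mathrm{Geom}(\mathrm{At})/\mathsf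 T$ is the quotient by mutual derivability, classes $[\varphi]_{\mathsf T}$, ordered by derivability; it is a frame. A congruence preorder on a frame $(L,\leq)$ is a preorder $\preceq$ on $L$ containing $\leq$ such that for every $S\subseteq L$, $\bigvee S\preceq b$ whenever $a\preceq b$ for all $a\in S$, and for every finite $S\subseteq L$, $b\preceq\bigwedge S$ whenever $b\preceq a$ for all $a\in S$. It induces $a\sim b$ iff $a\preceq b$ and $b\preceq a$; the quotient $L/{\sim}$ is ordered by the induced order. *)

From Stdlib Require Import List.
Import ListNotations.

Set Implicit Arguments.

Section Geom.
Variable At : Type.

Inductive conjf : Type :=
| CAtom : At -> conjf
| CTrue : conjf
| CAnd  : conjf -> conjf -> conjf.

(* Geom(At): a geometric formula  \/ S  is given by its set S of disjuncts *)
Definition geom : Type := conjf -> Prop.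

Definition gconj (g : conjf) : geom := fun g' => g' = g.
Definition gtrue : geom := gconj CTrue.

Definition gor (F : geom -> Prop) : geom :=
  fun g => exists phi, F phi /\ phi g.

Definition gand (phi psi : geom) : geom :=
  fun g => exists g1 g2, phi g1 /\ psi g2 /\ g = CAnd g1 g2.

Definition gmeet (l : list geom) : geom := fold_right gand gtrue l.

Definition theory : Type := geom -> geom -> Prop.

Definition theory_union (T U : theory) : theory := fun phi psi => T phi psi \/ U phi psi.

Inductive derives (T : theory) : geom -> geom -> Prop :=
| der_ax : forall phi psi, T phi psi -> derives T phi psi
| der_refl : forall phi, derives T phi phi
| der_cut : forall phi chi psi, derives T phi chi -> derives T chi psi -> derives T phi psi
| der_andl : forall phi psi, derives T (gand phi psi) phi
| der_andr : forall phi psi, derives T (gand phi psi) psi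
| der_andI : forall th phi psi, derives T th phi -> derives T th psi -> derives T th (gand phi psi)
| der_true : forall phi, derives T phi gtrue
| der_orE : forall (F : geom -> Prop) psi,
    (forall phi, F phi -> derives T phi psi) -> derives T (gor F) psi
| der_orI : forall (F : geom -> Prop) phi, F phi -> derives T phi (gor F).

(* Geom(At)/T is represented by the carrier geom with the preorder |-_T;
   its elements are the classes [phi]_T, [phi]_T <= [psi]_T iff phi |-_T psi.
   Joins: [gor F]; finite meets: [gmeet l].  A relation on Geom(At)/T is
   represented by a relation on representatives, invariant under T-equivalence. *)
Definition teq (T : theory) (phi psi : geom) : Prop := derives T phi psi /\ derives T psi phi.

Definition congruence_preorder (T : theory) (P : geom -> geom -> Prop) : Prop :=
  (forall a a' b b', teq T a a' -> teq T b b' -> P a b -> P a' b') /\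
  (forall a, P a a) /\
  (forall a b c, P a b -> P b c -> P a c) /\
  (forall a b, derives T a b -> P a b) /\
  (forall (S : geom -> Prop) b, (forall a, S a -> P a b) -> P (gor S) b) /\
  (forall (S : list geom) b, (forall a, In a S -> P b a) -> P b (gmeet S)).

Definition Rrel (T U : theory) (a b : geom) : Prop :=
  exists phi psi, theory_union T U phi psi /\ teq T a phi /\ teq T b psi.

Definition Rbar (T U : theory) (a b : geom) : Prop :=
  forall P, congruence_preorder T P -> (forall x y, Rrel T U x y -> P x y) -> P a b.

(* An order isomorphism between two posets presented as preorders on carriers
   (i.e. between their posetal quotients): f is well-defined, order preserving
   and reflecting, and surjective on classes. *)
Definition order_iso {A B : Type} (leA : A -> A -> Prop) (leB : B -> B -> Prop)
    (f : A -> B) : Prop :=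
  (forall a a', leA a a' <-> leB (f a) (f a')) /\
  (forall b, exists a, leB (f a) b /\ leB b (f a)).

End Geom.

Arguments gtrue {At}.

(* The least congruence preorder [Rbar T U] on Geom(At)/T containing R is exactly
   derivability in T u U.  Indeed |-_{T u U} is itself a congruence preorder on
   Geom(At)/T (it extends |-_T) and contains R; conversely every congruence
   preorder containing R is closed under each rule of |-_{T u U}, the axioms of
   T u U being the pairs of R.  Hence the identity on representatives is the
   required isomorphism. *)
From Stdlib Require Import List.
Import ListNotations.

Section Derivability.
Variable At : Type.
Implicit Types (T U : theory At) (a b phi psi : geom At).

Lemma derives_mono T (T' : theory At) a b :
  (forall phi psi, T phi psi -> T' phi psi) -> derives T a b -> derives T' a b.
Proof.
  intros HTT'; induction 1.
  - apply der_ax, HTT'; assumption.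
  - apply der_refl.
  - eapply der_cut; eassumption.
  - apply der_andl.
  - apply der_andr.
  - apply der_andI; assumption.
  - apply der_true.
  - apply der_orE; assumption.
  - apply der_orI; assumption.
Qed.

Lemma derives_union_l T U a b :
  derives T a b -> derives (theory_union T U) a b.
Proof. apply derives_mono; intros; left; assumption. Qed.

Lemma derives_gmeet T (S : list (geom At)) b :
  (forall a, In a S -> derives T b a) -> derives T b (gmeet S).
Proof.
  induction S as [|x S IH]; intros HS; simpl.
  - apply der_true.
  - apply der_andI.
    + apply HS; left; reflexivity.
    + apply IH; intros a Ha; apply HS; right; exact Ha.
Qed.

Lemma derives_gmeet2_gand T phi psi :
  derives T (gmeet [phi; psi]) (gand phi psi).
Proof.
  simpl; apply der_andI.
  - apply der_andl.
  - eapply der_cut; [apply der_andr | apply der_andl].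
Qed.

Lemma congruence_preorder_derives_union T U :
  congruence_preorder T (derives (theory_union T U)).
Proof.
  repeat split.
  - intros a a' b b' [_ Ha] [Hb _] Hab.
    eapply der_cut; [apply derives_union_l, Ha |].
    eapply der_cut; [exact Hab | apply derives_union_l, Hb].
  - intros; apply der_refl.
  - intros; eapply der_cut; eassumption.
  - intros; apply derives_union_l; assumption.
  - intros; apply der_orE; assumption.
  - intros; apply derives_gmeet; assumption.
Qed.

Lemma Rrel_derives_union T U a b :
  Rrel T U a b -> derives (theory_union T U) a b.
Proof.
  intros (phi & psi & Hax & [Ha _] & [_ Hb]).
  eapply der_cut; [apply derives_union_l, Ha |].
  eapply der_cut; [apply der_ax, Hax | apply derives_union_l, Hb].
Qed.

Lemma congruence_preorder_gand T (P : geom At -> geom At -> Prop) th phi psi :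
  congruence_preorder T P -> P th phi -> P th psi -> P th (gand phi psi).
Proof.
  intros (_ & _ & Htrans & Hder & _ & Hmeet) Hphi Hpsi.
  apply Htrans with (gmeet [phi; psi]).
  - apply Hmeet; intros x [<- | [<- | []]]; assumption.
  - apply Hder, derives_gmeet2_gand.
Qed.

Lemma derives_union_sub_congruence T U (P : geom At -> geom At -> Prop) a b :
  congruence_preorder T P -> (forall x y, Rrel T U x y -> P x y) ->
  derives (theory_union T U) a b -> P a b.
Proof.
  intros HP HR; pose proof HP as (_ & Hrefl & Htrans & Hder & Hjoin & _).
  induction 1.
  - apply HR; exists phi, psi; repeat split; assumption || apply der_refl.
  - apply Hrefl.
  - eapply Htrans; eassumption.
  - apply Hder, der_andl.
  - apply Hder, der_andr.
  - eapply congruence_preorder_gand; eassumption.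
  - apply Hder, der_true.
  - apply Hjoin; assumption.
  - apply Hder, der_orI; assumption.
Qed.

Lemma Rbar_iff_derives_union T U a b :
  Rbar T U a b <-> derives (theory_union T U) a b.
Proof.
  split.
  - intros Hab; apply Hab.
    + apply congruence_preorder_derives_union.
    + apply Rrel_derives_union.
  - intros Hab P HP HR; apply (derives_union_sub_congruence T U); assumption.
Qed.

End Derivability.

Theorem mainTheorem14 (At : Type) (T U : theory At) :
  exists f : geom At -> geom At,
    order_iso (derives (theory_union T U)) (Rbar T U) f.
Proof.
  exists (fun x => x); split.
  - intros a a'; symmetry; apply Rbar_iff_derives_union.
  - intros b; exists b; split; apply Rbar_iff_derives_union, der_refl.
Qed.
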